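(* Let $K,T\subset\mathbb{R}^n$ be convex bodies. (1) If $q=(q_1,\dots,q_m)$ is a closed strong $(K,T)$-Minkowski billiard trajectory with respect to the $K$-supporting hyperplanes $H_1,\dots,H_m$, then $q$ is a closed weak $(K,T)$-Minkowski billiard trajectory fulfilling the weak Minkowski billiard reflection rule with respect to $H_1,\dots,H_m$. (2) If in addition $T$ is strictly convex, and $q=(q_1,\dots,q_m)$ is a closed weak $(K,T)$-Minkowski billiard trajectory fulfilling the weak Minkowski billiard reflection rule with respect to $K$-supporting hyperplanes $H_1,\dots,H_m$, then $q$ is a closed strong $(K,T)$-Minkowski billiard trajectory with respect to $H_1,\dots,H_m$.
   Context: A convex body in $\mathbb{R}^n$ is a compact convex set containing the origin in its interior. For a convex body $T$, $T^\circ=\{x:\langle x,y\rangle\le 1\ \forall y\in T\}$ is its polar body and $\mu_{T^\circ}(x)=\min\{t\ge 0: x\in tT^\circ\}$ is the Minkowski functional of $T^\circ$ (it equals the support function $h_T(x)=\max_{y\in T}\langle x,y\rangle$). For a convex set $C$ and $z\in\partial C$, $N_C(z)=\{v:\langle v,y-z\rangle\le 0\ \forall y\in C\}$ is the outer normal cone. A closed polygonal curve with vertices $q_1,\dots,q_m$ ($m\ge 2$), written $(q_1,\dots,q_m)$, is always assumed to satisfy $q_j\ne q_{j+1}$ and $q_j\notin[q_{j-1},q_{j+1}]$ for all $j$, indices taken mod $m$. Its $\ell_T$-length is $\ell_T(q)=\sum_{j=1}^m\mu_{T^\circ}(q_{j+1}-q_j)$. Weak trajectories: a closed polygonal curve $q=(q_1,\dots,q_m)$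 with vertices on $\partial K$ is a closed weak $(K,T)$-Minkowski billiard trajectory if for each $j$ there is a supporting hyperplane $H_j$ of $K$ through $q_j$ such that $q_j$ minimizes $\bar q\mapsto \mu_{T^\circ}(\bar q-q_{j-1})+\mu_{T^\circ}(q_{j+1}-\bar q)$ over all $\bar q\in H_j$; one says $q$ fulfills the weak Minkowski billiard reflection rule with respect to $H_1,\dots,H_m$. Strong trajectories: a closed polygonal curve $q=(q_1,\dots,q_m)$ with vertices on $\partial K$ is a closed strong $(K,T)$-Minkowski billiard trajectory if there are $p_1,\dots,p_m\in\partial T$ with $q_{j+1}-q_j\in N_T(p_j)$ and $p_{j+1}-p_j\in -N_K(q_{j+1})$ for all $j$ (indices mod $m$); $p=(p_1,\dots,p_m)$ is called a closed dual billiard trajectory in $T$. It is a strong trajectory with respect to the $K$-supporting hyperplanes $H_1,\dots,H_m$ through $q_1,\dots,q_m$ if there are outer unit normal vectors $n_K(q_j)\in N_K(q_j)$ with $n_K(q_j)$ normal to $H_j$ and numbers $\mu_j\ge 0$ such that $p_{j+1}-p_j=-\mu_{j+1}n_K(q_{j+1})$ for all $j$. *)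

From HB Require Import structures.
From mathcomp Require Import all_boot all_order all_algebra.
From mathcomp Require Import all_classical all_reals all_analysis.
Set Implicit Arguments. Unset Strict Implicit. Unset Printing Implicit Defensive.
Import Order.TTheory GRing.Theory Num.Theory numFieldNormedType.Exports.
Local Open Scope classical_set_scope.
Local Open Scope ring_scope.

Section Billiards.
Variables (R : realType) (n : nat).
Notation pt := 'rV[R]_n.

Definition dotp (u v : pt) : R := \sum_(i < n) u 0 i * v 0 i.

Definition convex_set (A : set pt) : Prop :=
  forall x y t, A x -> A y -> 0 <= t <= 1 -> A ((1 - t) *: x + t *: y).

Definition convex_body (K : set pt) : Prop :=
  compact K /\ convex_set K /\ interior K 0.

Definition strictly_convex (T : set pt) : Prop :=
  forall x y t, T x -> T y -> x != y -> 0 < t < 1 ->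
    interior T ((1 - t) *: x + t *: y).

Definition bd (A : set pt) (z : pt) : Prop := closure A z /\ ~ interior A z.

Definition polar (T : set pt) : set pt :=
  [set x | forall y, T y -> dotp x y <= 1].

Definition mink (C : set pt) (x : pt) : R :=
  inf [set t : R | 0 <= t /\ exists y, C y /\ x = t *: y].

Definition normal_cone (C : set pt) (z : pt) : set pt :=
  [set v | forall y, C y -> dotp v (y - z) <= 0].

Definition supporting_hyperplane (K : set pt) (H : set pt) (z : pt) : Prop :=
  exists a : pt, a != 0 /\ H = [set x | dotp a (x - z) = 0] /\
    (forall y, K y -> dotp a (y - z) <= 0).

Definition normal_to (v : pt) (H : set pt) (z : pt) : Prop :=
  H = [set x | dotp v (x - z) = 0].

Definition segment (a b : pt) : set pt :=
  [set x | exists t : R, 0 <= t <= 1 /\ x = (1 - t) *: a + t *: b].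

(* closed polygonal curve (q_1,...,q_m), indices mod m via ordS / ord_pred *)
Definition closed_polygon (m : nat) (q : 'I_m -> pt) : Prop :=
  (1 < m)%N /\
  forall j : 'I_m, q j != q (ordS j) /\ ~ segment (q (ord_pred j)) (q (ordS j)) (q j).

Definition weak_traj_wrt (K T : set pt) (m : nat) (q : 'I_m -> pt)
    (H : 'I_m -> set pt) : Prop :=
  forall j : 'I_m,
    bd K (q j) /\ supporting_hyperplane K (H j) (q j) /\
    forall qb, H j qb ->
      mink (polar T) (q j - q (ord_pred j)) + mink (polar T) (q (ordS j) - q j)
      <= mink (polar T) (qb - q (ord_pred j)) + mink (polar T) (q (ordS j) - qb).

Definition strong_traj_dual (K T : set pt) (m : nat) (q p : 'I_m -> pt) : Prop :=
  forall j : 'I_m,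
    bd K (q j) /\ bd T (p j) /\
    normal_cone T (p j) (q (ordS j) - q j) /\
    normal_cone K (q (ordS j)) (- (p (ordS j) - p j)).

Definition strong_traj_wrt (K T : set pt) (m : nat) (q : 'I_m -> pt)
    (H : 'I_m -> set pt) : Prop :=
  (forall j, supporting_hyperplane K (H j) (q j)) /\
  exists (p : 'I_m -> pt) (nK : 'I_m -> pt) (mu : 'I_m -> R),
    strong_traj_dual K T q p /\
    forall j : 'I_m,
      normal_cone K (q j) (nK j) /\ dotp (nK j) (nK j) = 1 /\
      normal_to (nK j) (H j) (q j) /\ 0 <= mu j /\
      p (ordS j) - p j = - (mu (ordS j) *: nK (ordS j)).

End Billiards.

From HB Require Import structures.
From mathcomp Require Import all_boot all_order all_algebra.
From mathcomp Require Import all_classical all_reals all_analysis.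
From mathcomp Require Import ring lra.
Set Implicit Arguments. Unset Strict Implicit. Unset Printing Implicit Defensive.
Import Order.TTheory GRing.Theory Num.Theory numFieldNormedType.Exports.
Local Open Scope classical_set_scope.
Local Open Scope ring_scope.

(* The support function h_T = mu_{T°} is attained: h_T(x) = <x, p> whenever p lies in T
   and x in N_T(p).  For strong => weak, bounding h_T(qb - q_{j-1}) and h_T(q_{j+1} - qb)
   from below by the dual points p_{j-1}, p_j shows that the l_T-length through any qb in
   H_j is at least the one through q_j plus <qb - q_j, p_{j-1} - p_j>, and this vanishes
   because p_{j-1} - p_j is normal to H_j.
   For weak => strong with T strictly convex, the maximiser p(x) of <x, .> on T is unique
   and h_T(x + s w) <= h_T(x) + s (<w, p(x)> + eps) for small s > 0.  Minimality of q_j on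
   H_j then forces p_{j-1} - p_j to be orthogonal to H_j, hence a multiple c a_j of its
   normal; and c >= 0, since otherwise q_{j-1}, q_{j+1} both lie on H_j, so minimality
   gives h_T(u) + h_T(v) = h_T(u + v), which forces p(u) = p(v). *)

Section SupportFunction.
Variables (R : realType) (n : nat).
Notation pt := 'rV[R]_n.
Implicit Types (a d u v w x y z p : pt) (A C T : set pt).

Lemma dotpC u v : dotp u v = dotp v u.
Proof. by apply: eq_bigr => i _; rewrite mulrC. Qed.

Lemma dotpDl u v w : dotp (u + v) w = dotp u w + dotp v w.
Proof. by rewrite /dotp -big_split; apply: eq_bigr => i _; rewrite !mxE mulrDl. Qed.

Lemma dotpZl (c : R) u w : dotp (c *: u) w = c * dotp u w.
Proof. by rewrite /dotp mulr_sumr; apply: eq_bigr => i _; rewrite !mxE mulrA. Qed.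

Lemma dotpNl u w : dotp (- u) w = - dotp u w.
Proof. by rewrite -scaleN1r dotpZl mulN1r. Qed.

Lemma dotpBl u v w : dotp (u - v) w = dotp u w - dotp v w.
Proof. by rewrite dotpDl dotpNl. Qed.

Lemma dotpDr u v w : dotp w (u + v) = dotp w u + dotp w v.
Proof. by rewrite dotpC dotpDl !(dotpC w). Qed.

Lemma dotpZr (c : R) u w : dotp w (c *: u) = c * dotp w u.
Proof. by rewrite dotpC dotpZl dotpC. Qed.

Lemma dotpNr u w : dotp w (- u) = - dotp w u.
Proof. by rewrite dotpC dotpNl dotpC. Qed.

Lemma dotpBr u v w : dotp w (u - v) = dotp w u - dotp w v.
Proof. by rewrite dotpDr dotpNr. Qed.

Lemma dotp0l w : dotp 0 w = 0.
Proof. by rewrite -(scale0r 0) dotpZl mul0r. Qed.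

Lemma dotpp_ge0 x : 0 <= dotp x x.
Proof. by apply: sumr_ge0 => i _; rewrite -expr2 sqr_ge0. Qed.

Lemma dotpp_eq0 x : (dotp x x == 0) = (x == 0).
Proof.
apply/idP/eqP => [|->]; last by rewrite dotp0l.
rewrite psumr_eq0 => [/allP x0|i _]; last by rewrite -expr2 sqr_ge0.
apply/matrixP => i j; rewrite ord1 mxE.
by have /implyP/(_ isT) := x0 j (mem_index_enum j); rewrite mulf_eq0 orbb => /eqP.
Qed.

Lemma dotpp_gt0 x : (0 < dotp x x) = (x != 0).
Proof. by rewrite lt_def dotpp_ge0 dotpp_eq0 andbT. Qed.

Lemma continuous_dotp x : continuous (dotp x).
Proof.
apply: (@continuous_big R 'I_n +%R 0 xpredT _ pt _ (fun i y => x 0 i * y 0 i)).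
  exact: (@add_continuous R^o).
move=> i _ y; apply: continuousM; first exact: cst_continuous.
exact: (@coord_continuous R 1 n 0 i).
Qed.

Lemma orthogonal_proportional a d : a != 0 ->
  (forall w, dotp a w = 0 -> dotp d w = 0) -> d = (dotp d a / dotp a a) *: a.
Proof.
move=> a0 da; set c := dotp d a / dotp a a; set w := d - c *: a.
have aa0 : dotp a a != 0 by rewrite dotpp_eq0.
have aw : dotp a w = 0 by rewrite dotpBr dotpZr /c mulfVK // dotpC subrr.
have ww : dotp w w = 0 by rewrite {1}/w dotpBl dotpZl da // aw mulr0 subr0.
by apply/eqP; rewrite -subr_eq0 -dotpp_eq0 ww.
Qed.

Lemma normal_cone_scale C z v (c : R) :
  0 <= c -> normal_cone C z v -> normal_cone C z (c *: v).
Proof. by move=> c0 Nv y Cy; rewrite dotpZl mulr_ge0_le0 ?Nv. Qed.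

Lemma normal_to_scale a z (c : R) :
  c != 0 -> normal_to (c *: a) [set x | dotp a (x - z) = 0] z.
Proof.
move=> c0; rewrite /normal_to; apply/seteqP; split => x /=; rewrite dotpZl.
  by move->; rewrite mulr0.
by move/eqP; rewrite mulf_eq0 (negbTE c0) => /eqP.
Qed.

Lemma dotp_normalize a : a != 0 ->
  dotp ((Num.sqrt (dotp a a))^-1 *: a) ((Num.sqrt (dotp a a))^-1 *: a) = 1.
Proof.
move=> a0; rewrite dotpZl dotpZr mulrA -expr2 exprVn sqr_sqrtr ?dotpp_ge0 //.
by rewrite mulVf // dotpp_eq0.
Qed.

Lemma interior_ray A z x : interior A z -> exists2 d : R, 0 < d & A (z + d *: x).
Proof.
move=> /nbhs_ballP[e e0 zeA]; pose d := e / (2 * (`|x| + 1)).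
have x1 : 0 < `|x| + 1 by rewrite ltr_wpDl.
have d0 : 0 < d by rewrite divr_gt0 // mulr_gt0.
exists d => //; apply: zeA; rewrite -ball_normE /= opprD addrA subrr add0r normrN normrZ.
rewrite gtr0_norm // /d mulrAC ltr_pdivrMr ?mulr_gt0 // ltr_pM2l //; lra.
Qed.

Lemma convex_body_closed T : convex_body T -> closed T.
Proof. by case=> cT _; apply: compact_closed => //; exact: norm_hausdorff. Qed.

Lemma convex_body0 T : convex_body T -> T 0.
Proof. by case=> _ [_ /interior_subset]. Qed.

Lemma convex_body_closure T z : convex_body T -> closure T z -> T z.
Proof. by move=> /convex_body_closed/closure_id {2}->. Qed.

Lemma convex_body_dotp_le0 T x : convex_body T ->
  (forall y, T y -> dotp x y <= 0) -> x = 0.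
Proof.
case=> _ [_ /(interior_ray x)[d d0 Td]] xT; apply/eqP; rewrite -dotpp_eq0.
by rewrite eq_le dotpp_ge0 andbT -(pmulr_rle0 _ d0) -dotpZr -(add0r (d *: x)) xT.
Qed.

Definition support_point T x p := T p /\ forall y, T y -> dotp x y <= dotp x p.

Lemma support_point_normal_cone T x p :
  support_point T x p <-> T p /\ normal_cone T p x.
Proof.
split=> -[Tp xp]; split=> // y Ty; have := xp y Ty; rewrite ?dotpBr; lra.
Qed.

Lemma support_point_exists T x : convex_body T -> exists p, support_point T x p.
Proof.
move=> T_cb; have [|||p /set_mem Tp xp] := @EVT_max_rV R n (dotp x) T.
- by exists 0; exact: convex_body0.
- by case: T_cb.
- by apply: continuous_subspaceT => y; exact: continuous_dotp.
by exists p; split=> // y /mem_set; exact: xp.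
Qed.

Lemma support_point_not_interior T x p : x != 0 -> support_point T x p -> ~ interior T p.
Proof.
move=> x0 [_ xp] /(interior_ray x)[d d0 /xp].
by rewrite dotpDr dotpZr; have := mulr_gt0 d0 (etrans (dotpp_gt0 x) x0); lra.
Qed.

Lemma mink_polar_support T x p : convex_body T -> support_point T x p ->
  mink (polar T) x = dotp x p.
Proof.
move=> T_cb [Tp xp].
set S := [set t : R | 0 <= t /\ exists y, polar T y /\ x = t *: y].
have Sxp : S (dotp x p).
  have [xp0|xp_le0] := ltrP 0 (dotp x p).
    split; first exact: ltW.
    exists ((dotp x p)^-1 *: x); rewrite scalerA mulfV ?gt_eqF // scale1r.
    by split=> // y Ty; rewrite dotpZl ler_pdivrMl // mulr1 xp.
  have x0 : x = 0 by apply: (convex_body_dotp_le0 T_cb) => y /xp/le_trans; apply.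
  by rewrite x0 dotp0l; split=> //; exists 0; rewrite scale0r; split=> // y _; rewrite dotp0l.
have Slb : lbound S (dotp x p).
  by move=> t [t0 [y [Ty ->]]]; rewrite dotpZl ler_piMr // Ty.
apply: le_anti; rewrite ge_inf ?lb_le_inf //; by exists (dotp x p).
Qed.

Lemma dotp_le_mink_polar T x y : convex_body T -> T y -> dotp x y <= mink (polar T) x.
Proof.
move=> T_cb Ty; have [p px] := support_point_exists x T_cb.
by rewrite (mink_polar_support T_cb px); exact: px.2.
Qed.

End SupportFunction.

Section StrictlyConvex.
Variables (R : realType) (n : nat) (T : set 'rV[R]_n).
Hypotheses (T_cb : convex_body T) (T_sc : strictly_convex T).
Implicit Types (a u v w x y p : 'rV[R]_n).
Local Notation h := (mink (polar T)).

Lemma support_point_uniq x p1 p2 : x != 0 ->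
  support_point T x p1 -> support_point T x p2 -> p1 = p2.
Proof.
move=> x0 [Tp1 xp1] [Tp2 xp2]; apply/eqP/negP => /negP p12.
have mid : (0 < 2^-1 :> R) && (2^-1 < 1 :> R) by apply/andP; split; lra.
have [d d0 /xp1] := interior_ray x (T_sc Tp1 Tp2 p12 mid).
rewrite !dotpDr !dotpZr; have := xp1 _ Tp2; have := xp2 _ Tp1.
have := mulr_gt0 d0 (etrans (dotpp_gt0 x) x0); lra.
Qed.

(* Compactness turns uniqueness of the maximiser into a quantitative gap. *)
Lemma support_point_gap x p w (del : R) : x != 0 -> support_point T x p -> 0 < del ->
  exists2 eta : R, 0 < eta &
    forall y, T y -> dotp w p + del <= dotp w y -> dotp x y <= dotp x p - eta.
Proof.
move=> x0 [Tp xp] del0.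
set C := T `&` (dotp w @^-1` [set r | dotp w p + del <= r]).
have [C0|/set0P/negP/negPn/eqP C0] := pselect (C !=set0); last first.
  by exists 1 => // y Ty wy; have : C y by []; rewrite C0.
have C_compact : compact C.
  apply: compact_closedI; first by case: T_cb.
  by apply: closed_comp => [y _|]; [exact: continuous_dotp | exact: closed_ge].
have [|c /set_mem[Tc wc] cx] := @EVT_max_rV R n (dotp x) C C0 C_compact.
  by apply: continuous_subspaceT => y; exact: continuous_dotp.
exists (dotp x p - dotp x c) => [|y Ty wy]; last first.
  by have := cx y (mem_set (conj Ty wy)); lra.
rewrite subr_gt0 ltNge; apply/negP => pc.
have c_sp : support_point T x c by split=> // y /xp/le_trans; apply.
move: wc; rewrite /= (support_point_uniq x0 c_sp (conj Tp xp)); lra.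
Qed.

Lemma mink_polar_shift_le x p w (eps : R) : x != 0 -> support_point T x p -> 0 < eps ->
  exists2 s0 : R, 0 < s0 &
    forall s, 0 < s <= s0 -> h (x + s *: w) <= h x + s * (dotp w p + eps).
Proof.
move=> x0 xp eps0; have [eta eta0 gap] := support_point_gap w x0 xp eps0.
have hw : dotp w p <= h w := dotp_le_mink_polar w T_cb xp.1.
exists (eta / (h w - dotp w p + 1)) => [|s /andP[s0]]; first by rewrite divr_gt0 //; lra.
rewrite ler_pdivlMr; last by lra.
have [y xy] := support_point_exists (x + s *: w) T_cb.
rewrite (mink_polar_support T_cb xy) (mink_polar_support T_cb xp) dotpDl dotpZl => s_eta.
have swy : s * dotp w y <= s * h w by rewrite ler_pM2l // dotp_le_mink_polar //; exact: xy.1.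
have [wy|wy] := lerP (dotp w p + eps) (dotp w y).
  by have := gap _ xy.1 wy; nra.
by have := xp.2 _ xy.1; nra.
Qed.

Lemma support_points_orthogonal u v pu pv a : u != 0 -> v != 0 ->
  support_point T u pu -> support_point T v pv ->
  (forall w, dotp a w = 0 -> h u + h v <= h (u + w) + h (v - w)) ->
  forall w, dotp a w = 0 -> dotp (pu - pv) w = 0.
Proof.
move=> u0 v0 upu vpv hmin.
suff ge0 w : dotp a w = 0 -> 0 <= dotp (pu - pv) w.
  move=> w aw; apply/eqP; rewrite eq_le ge0 // andbT -oppr_ge0 -dotpNr ge0 //.
  by rewrite dotpNr aw oppr0.
move=> aw; rewrite leNgt; apply/negP => neg.
pose eps := - dotp (pu - pv) w / 4.
have eps0 : 0 < eps by rewrite /eps; lra.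
have [s1 s10 ub1] := mink_polar_shift_le w u0 upu eps0.
have [s2 s20 ub2] := mink_polar_shift_le (- w) v0 vpv eps0.
pose s := Num.min s1 s2.
have s0 : 0 < s by rewrite lt_min s10 s20.
have := hmin (s *: w); rewrite dotpZr aw mulr0 => /(_ erefl).
have := ub1 s; rewrite s0 ge_min lexx => /(_ isT).
have := ub2 s; rewrite s0 ge_min lexx orbT scalerN => /(_ isT).
have : s * (dotp w pu + eps) + s * (dotp (- w) pv + eps) = - (2 * s * eps).
  by rewrite dotpNl /eps dotpBl !(dotpC w); field.
have := mulr_gt0 s0 eps0; lra.
Qed.

Lemma support_point_add_eq u v pu pv : u != 0 -> v != 0 ->
  support_point T u pu -> support_point T v pv -> h u + h v <= h (u + v) -> pu = pv.
Proof.
move=> u0 v0 upu vpv huv; have [r uvr] := support_point_exists (u + v) T_cb.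
move: huv; rewrite (mink_polar_support T_cb upu) (mink_polar_support T_cb vpv).
rewrite (mink_polar_support T_cb uvr) dotpDl => huv.
have ur := upu.2 _ uvr.1; have vr := vpv.2 _ uvr.1.
have r_u : support_point T u r by split=> [|y /upu.2]; [exact: uvr.1 | lra].
have r_v : support_point T v r by split=> [|y /vpv.2]; [exact: uvr.1 | lra].
by rewrite (support_point_uniq u0 upu r_u) (support_point_uniq v0 vpv r_v).
Qed.

Lemma support_points_sub_scale_ge0 u v pu pv a (c : R) : u != 0 -> v != 0 -> a != 0 ->
  support_point T u pu -> support_point T v pv -> 0 <= dotp a u -> dotp a v <= 0 ->
  (forall w, dotp a w = 0 -> h u + h v <= h (u + w) + h (v - w)) ->
  pu - pv = c *: a -> 0 <= c.
Proof.
move=> u0 v0 a0 upu vpv au av hmin puv; rewrite leNgt; apply/negP => c0.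
have dotp_puv z : dotp (pu - pv) z = c * dotp a z by rewrite puv dotpZl.
have au0 : dotp a u = 0.
  have := upu.2 _ vpv.1; have := dotp_puv u; rewrite dotpBl (dotpC pu) (dotpC pv); nra.
have av0 : dotp a v = 0.
  have := vpv.2 _ upu.1; have := dotp_puv v; rewrite dotpBl (dotpC pu) (dotpC pv); nra.
have [p0 p0_sp] := support_point_exists 0 T_cb.
have := hmin (- u); rewrite dotpNr au0 oppr0 subrr opprK (addrC v) => /(_ erefl).
rewrite (mink_polar_support T_cb p0_sp) dotp0l add0r.
move/(support_point_add_eq u0 v0 upu vpv) => pu_pv.
by move/eqP: puv; rewrite pu_pv subrr eq_sym scaler_eq0 (negbTE a0) orbF lt_eqF.
Qed.

Lemma support_points_sub_normal u v pu pv a : u != 0 -> v != 0 -> a != 0 ->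
  support_point T u pu -> support_point T v pv -> 0 <= dotp a u -> dotp a v <= 0 ->
  (forall w, dotp a w = 0 -> h u + h v <= h (u + w) + h (v - w)) ->
  exists2 c : R, 0 <= c & pu - pv = c *: a.
Proof.
move=> u0 v0 a0 upu vpv au av hmin.
have puv := orthogonal_proportional a0 (support_points_orthogonal u0 v0 upu vpv hmin).
exists (dotp (pu - pv) a / dotp a a) => //.
exact: (support_points_sub_scale_ge0 u0 v0 a0 upu vpv au av hmin puv).
Qed.

End StrictlyConvex.

Lemma mink_polar_path_le (R : realType) n (T : set 'rV[R]_n) q0 q1 q2 qb p0 p1 :
  convex_body T -> support_point T (q1 - q0) p0 -> support_point T (q2 - q1) p1 ->
  dotp (qb - q1) (p0 - p1) = 0 ->
  mink (polar T) (q1 - q0) + mink (polar T) (q2 - q1) <=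
  mink (polar T) (qb - q0) + mink (polar T) (q2 - qb).
Proof.
move=> T_cb p0_sp p1_sp qbp.
rewrite (mink_polar_support T_cb p0_sp) (mink_polar_support T_cb p1_sp).
have := dotp_le_mink_polar (qb - q0) T_cb p0_sp.1.
have := dotp_le_mink_polar (q2 - qb) T_cb p1_sp.1.
move: qbp; rewrite !dotpBl !dotpBr; lra.
Qed.

Lemma strong_traj_weak (R : realType) n (K T : set 'rV[R]_n) m (q : 'I_m -> 'rV[R]_n) H :
  convex_body T -> strong_traj_wrt K T q H -> weak_traj_wrt K T q H.
Proof.
move=> T_cb [H_supp [p [nK [mu [pq pnK]]]]] j.
have [_ [_ [Hj _]]] := pnK j.
have [_ [_ [_ [_ pj]]]] := pnK (ord_pred j); rewrite ord_predK in pj.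
split; first exact: (pq j).1.
split=> [|qb]; first exact: H_supp.
rewrite Hj /= => qbH.
have p_sp i : support_point T (q (ordS i) - q i) (p i).
  by apply/support_point_normal_cone; have [_ [[pT _] [Np _]]] := pq i;
     split=> //; exact: convex_body_closure T_cb pT.
have := p_sp (ord_pred j); rewrite ord_predK => p'_sp.
apply: (mink_polar_path_le T_cb p'_sp (p_sp j)).
by rewrite -(opprB (p j)) pj opprK dotpZr dotpC qbH mulr0.
Qed.

Lemma weak_traj_strong (R : realType) n (K T : set 'rV[R]_n) m (q : 'I_m -> 'rV[R]_n) H :
  convex_body K -> convex_body T -> strictly_convex T ->
  closed_polygon q -> weak_traj_wrt K T q H -> strong_traj_wrt K T q H.
Proof.
move=> K_cb T_cb T_sc [_ q_poly] qW.
pose v j := q (ordS j) - q j.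
have v0 j : v j != 0 by rewrite subr_eq0 eq_sym; exact: (q_poly j).1.
have [p vp] := choice (fun j => support_point_exists (v j) T_cb).
have [a aH] := choice (fun j => (qW j).2.1).
have reflection j : exists c : R, 0 <= c /\ p (ord_pred j) - p j = c *: a j.
  have [a0 [Hj aK]] := aH j.
  have v_pred : v (ord_pred j) = q j - q (ord_pred j) by rewrite /v ord_predK.
  have qK i : K (q i) := convex_body_closure K_cb (qW i).1.1.
  have [||w aw|cj cj_ge0 pcj] :=
    support_points_sub_normal T_cb T_sc (v0 (ord_pred j)) (v0 j) a0 (vp (ord_pred j)) (vp j).
  - by rewrite v_pred -opprB dotpNr oppr_ge0; exact: aK _ (qK _).
  - exact: aK _ (qK _).
  - have qbH : H j (q j + w) by rewrite Hj /= addrAC subrr add0r.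
    have := (qW j).2.2 _ qbH.
    by rewrite v_pred /v -addrA (addrC w) addrA opprD addrA.
  - by exists cj.
have [c cP] := choice reflection.
pose s j := Num.sqrt (dotp (a j) (a j)).
have s0 j : s j != 0 by rewrite sqrtr_eq0 -ltNge dotpp_gt0; exact: (aH j).1.
split=> [j|]; first exact: (qW j).2.1.
exists p, (fun j => (s j)^-1 *: a j), (fun j => c j * s j); split=> j.
  split; first exact: (qW j).1.
  split; first by split; [exact: subset_closure (vp j).1 |
                          exact: support_point_not_interior (v0 j) (vp j)].
  split; first exact: ((support_point_normal_cone _ _ _).1 (vp j)).2.
  have [c0 pc] := cP (ordS j); rewrite ordSK in pc.
  by rewrite opprB pc; apply: normal_cone_scale c0 (aH (ordS j)).2.2.
have [a0 [Hj aK]] := aH j.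
split; first by apply: normal_cone_scale aK; rewrite invr_ge0 sqrtr_ge0.
split; first exact: dotp_normalize.
split; first by rewrite Hj; apply: normal_to_scale; rewrite invr_eq0.
split; first by rewrite mulr_ge0 ?sqrtr_ge0 ?(cP j).1.
have [_ pc] := cP (ordS j); rewrite ordSK in pc.
by rewrite scalerA -mulrA mulfV // mulr1 -pc opprB.
Qed.

Theorem theorem1p1 (R : realType) (n : nat) (K T : set 'rV[R]_n) :
  convex_body K -> convex_body T ->
  (forall (m : nat) (q : 'I_m -> 'rV[R]_n) (H : 'I_m -> set 'rV[R]_n),
     closed_polygon q -> strong_traj_wrt K T q H -> weak_traj_wrt K T q H) /\
  (strictly_convex T ->
   forall (m : nat) (q : 'I_m -> 'rV[R]_n) (H : 'I_m -> set 'rV[R]_n),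
     closed_polygon q -> weak_traj_wrt K T q H -> strong_traj_wrt K T q H).
Proof.
move=> K_cb T_cb; split=> [m q H _|T_sc m q H]; first exact: strong_traj_weak.
exact: weak_traj_strong.
Qed.
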